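(* Let $A$ and $B$ be positive definite $d\times d$ matrices, $\lambda\in(0,1)$, and denote $(A,B)_\lambda=\lambda A+(1-\lambda)B$ and $(A^2,B^2)_\lambda=\lambda A^2+(1-\lambda)B^2$. Then $$\mathrm{Tr}\left(\sqrt{(A^2,B^2)_\lambda}-(A,B)_\lambda\right)=\lambda(1-\lambda)\,\mathrm{Tr}\left((A-B)^2\left(\sqrt{(A^2,B^2)_\lambda}+(A,B)_\lambda\right)^{-1}\right).$$
   Context: $\sqrt{\cdot}$ denotes the positive semidefinite square root of a positive definite matrix. *)

From HB Require Import structures.
From mathcomp Require Import all_boot all_order all_algebra.
Set Implicit Arguments. Unset Strict Implicit. Unset Printing Implicit Defensive.
Import Order.TTheory GRing.Theory Num.Theory.
Local Open Scope ring_scope.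

Definition hermmx (C : numClosedFieldType) (d : nat) (M : 'M[C]_d) : Prop :=
  (map_mx Num.conj_op M)^T = M.

Definition posdefmx (C : numClosedFieldType) (d : nat) (M : 'M[C]_d) : Prop :=
  hermmx M /\ forall v : 'rV[C]_d, v != 0 ->
    0 < (v *m M *m (map_mx Num.conj_op v)^T) 0 0.

Definition psdmx (C : numClosedFieldType) (d : nat) (M : 'M[C]_d) : Prop :=
  hermmx M /\ forall v : 'rV[C]_d, 0 <= (v *m M *m (map_mx Num.conj_op v)^T) 0 0.

Definition is_psd_sqrt (C : numClosedFieldType) (d : nat) (S M : 'M[C]_d) : Prop :=
  psdmx S /\ S *m S = M.

From HB Require Import structures.
From mathcomp Require Import all_boot all_order all_algebra.
From mathcomp Require Import ring.
Set Implicit Arguments.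
Unset Strict Implicit.
Unset Printing Implicit Defensive.
Import Order.TTheory GRing.Theory Num.Theory.
Local Open Scope ring_scope.

(* With M = (A,B)_l, the identity S^2 - M^2 = l(1-l)(A-B)^2 holds for arbitrary
   matrices A, B.  Although S and M need not commute, Tr (S - M) equals
   Tr ((S^2 - M^2)(S+M)^-1) as soon as S + M is invertible, because
   Tr (S M (S+M)^-1) and Tr (M S (S+M)^-1) both equal Tr S - Tr (S^2 (S+M)^-1).
   Finally S + M is invertible, being positive semidefinite plus positive
   definite. *)

Section TraceDifference.

Variables (R : comUnitRingType) (n : nat).
Implicit Types P N Q : 'M[R]_n.

Lemma mxtraceB_sqr_invD P N : P + N \in unitmx ->
  \tr (P - N) = \tr ((P *m P - N *m N) *m invmx (P + N)).
Proof.
move=> unitPN; set X := invmx (P + N).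
have trR Q : \tr Q = \tr (Q *m (P + N) *m X) by rewrite -mulmxA mulmxV ?mulmx1.
have trL Q : \tr Q = \tr ((P + N) *m Q *m X).
  by rewrite mxtrace_mulC mulmxA mulVmx ?mul1mx.
have trPN : \tr (P *m N *m X) = \tr (N *m P *m X).
  apply: (addrI (\tr (P *m P *m X))).
  by rewrite -!mxtraceD -!mulmxDl -mulmxDr -trR; apply: trL.
rewrite [LHS]trR mulmxBl !mulmxDr !mulmxBl !mulmxDl !raddfB !raddfD /= trPN.
ring.
Qed.

End TraceDifference.

Lemma mix_sqr_subr_sqr_mix (R : comNzRingType) (n : nat) (l : R) (A B : 'M[R]_n) :
  l *: (A *m A) + (1 - l) *: (B *m B)
    - (l *: A + (1 - l) *: B) *m (l *: A + (1 - l) *: B)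
  = (l * (1 - l)) *: ((A - B) *m (A - B)).
Proof.
rewrite !mulmxDl !mulmxDr !mulNmx !mulmxN -!scalemxAl -!scalemxAr !scalerA.
move: (A *m A) (A *m B) (B *m A) (B *m B) => AA AB BA BB.
by apply/matrixP => i j; rewrite !mxE; ring.
Qed.

Section PositiveDefinite.

Variables (C : numClosedFieldType) (d : nat).
Implicit Types (M N : 'M[C]_d) (v : 'rV[C]_d).

Definition qform M v : C := (v *m M *m (map_mx Num.conj_op v)^T) 0 0.

Lemma qformD M N v : qform (M + N) v = qform M v + qform N v.
Proof. by rewrite /qform mulmxDr mulmxDl mxE. Qed.

Lemma qformZ a M v : qform (a *: M) v = a * qform M v.
Proof. by rewrite /qform -scalemxAr -scalemxAl mxE. Qed.

Lemma qform0 M : qform M 0 = 0.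
Proof. by rewrite /qform !mul0mx mxE. Qed.

Lemma hermmxD M N : hermmx M -> hermmx N -> hermmx (M + N).
Proof. by rewrite /hermmx map_mxD linearD /= => -> ->. Qed.

Lemma hermmxZ a M : a \is Num.real -> hermmx M -> hermmx (a *: M).
Proof. by rewrite /hermmx map_mxZ linearZ /= => /conj_Creal -> ->. Qed.

Lemma posdefmx_psd M : posdefmx M -> psdmx M.
Proof.
move=> [hermM posM]; split=> // v.
have [-> | nz_v] := eqVneq v 0; first by rewrite [X in _ <= X]qform0.
exact/ltW/posM.
Qed.

Lemma psdmx_posdefmxD M N : psdmx M -> posdefmx N -> posdefmx (M + N).
Proof.
move=> [hermM psdM] [hermN posN]; split=> [|v nz_v]; first exact: hermmxD.
change (0 < qform (M + N) v); rewrite qformD.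
exact: ltr_wpDl (psdM v) (posN v nz_v).
Qed.

Lemma posdefmxD M N : posdefmx M -> posdefmx N -> posdefmx (M + N).
Proof. by move=> /posdefmx_psd; apply: psdmx_posdefmxD. Qed.

Lemma posdefmxZ a M : 0 < a -> posdefmx M -> posdefmx (a *: M).
Proof.
move=> a_gt0 [hermM posM]; split=> [|v nz_v]; first exact/hermmxZ/hermM/gtr0_real.
change (0 < qform (a *: M) v); rewrite qformZ.
exact: mulr_gt0 a_gt0 (posM v nz_v).
Qed.

Lemma posdefmx_unit M : posdefmx M -> M \in unitmx.
Proof.
move=> [_ posM]; rewrite unitmxE unitfE; apply/det0P => -[v nz_v vM0].
by have := posM v nz_v; rewrite vM0 mul0mx mxE ltxx.
Qed.

End PositiveDefinite.

Theorem lemma2p1 (C : numClosedFieldType) (d : nat) (A B : 'M[C]_d) (l : C)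
  (hA : posdefmx A) (hB : posdefmx B) (hl0 : 0 < l) (hl1 : l < 1)
  (S : 'M[C]_d)
  (hS : is_psd_sqrt S (l *: (A *m A) + (1 - l) *: (B *m B))) :
  \tr (S - (l *: A + (1 - l) *: B)) =
  l * (1 - l) *
    \tr (((A - B) *m (A - B)) *m invmx (S + (l *: A + (1 - l) *: B))).
Proof.
have [psdS sqrS] := hS.
have posM : posdefmx (l *: A + (1 - l) *: B).
  by apply: posdefmxD; apply: posdefmxZ; rewrite ?subr_gt0.
have unitSM := posdefmx_unit (psdmx_posdefmxD psdS posM).
by rewrite mxtraceB_sqr_invD // sqrS mix_sqr_subr_sqr_mix -scalemxAl mxtraceZ.
Qed.
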